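(* Let $X$ be a random variable with survival function $\overline{F}(x) = \mathbb{P}(X > x)$ given by $\overline{F}(x) = 1$ for $x < 0$ and $\overline{F}(x) = (\lfloor x \rfloor + 2)^{-1}$ for $x \geq 0$. For $n \geq 2$ let $X_1, \dots, X_n$ be i.i.d. copies of $X$ and $\overline{X}_n = \frac{1}{n}\sum_{i=1}^n X_i$. Then $X \leq_{\mathrm{st}} \overline{X}_n$ for all $n \geq 2$.
   Context: For random variables $X, Y$, $X \leq_{\mathrm{st}} Y$ means $\mathbb{P}(X > x) \leq \mathbb{P}(Y > x)$ for all $x \in \mathbb{R}$. *)

From HB Require Import structures.
From mathcomp Require Import all_boot all_order all_algebra.
From mathcomp Require Import all_classical all_reals all_analysis.
Set Implicit Arguments. Unset Strict Implicit. Unset Printing Implicit Defensive.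
Import Order.TTheory GRing.Theory Num.Theory.
Local Open Scope classical_set_scope.
Local Open Scope ring_scope.

Definition Fbar (R : realType) (x : R) : R :=
  if x < 0 then 1 else ((Num.floor x)%:~R + 2)^-1.

Definition has_survival d (T : measurableType d) (R : realType)
  (P : probability T R) (X : T -> R) (F : R -> R) : Prop :=
  forall x : R, P [set t | x < X t] = (F x)%:E.

Definition mutually_independent d (T : measurableType d) (R : realType)
  (P : probability T R) (n : nat) (X : 'I_n -> T -> R) : Prop :=
  forall B : 'I_n -> set R, (forall i, measurable (B i)) ->
    P (\bigcap_(i in [set: 'I_n]) (X i @^-1` B i)) =
    (\prod_(i < n) P (X i @^-1` B i))%E.

Definition st_le d (T : measurableType d) d' (T' : measurableType d')
  (R : realType) (P : probability T R) (X : T -> R)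
  (Q : probability T' R) (Y : T' -> R) : Prop :=
  forall x : R, (P [set t | (x < X t)%R] <= Q [set t | (x < Y t)%R])%E.

From HB Require Import structures.
From mathcomp Require Import all_boot all_order all_algebra.
From mathcomp Require Import all_classical all_reals all_analysis.
From mathcomp Require Import ring lra.
Import Order.TTheory GRing.Theory Num.Theory.
Local Open Scope classical_set_scope.
Local Open Scope ring_scope.

(* If every X_i exceeds c and some X_i exceeds y, then the sum exceeds
   y + (n-1) c; by independence this event has probability
   Fbar c ^ n - (Fbar c - Fbar y) ^ n.  Taking c < 0 makes Fbar c = 1, so the
   lower bound on the other summands is almost sure.  For x >= 0 with
   k = floor x and N = n (k + 1), take y slightly below N: then
   Fbar y = 1 / (N + 1), and Bernoulli's inequality gives
   (N / (N + 1)) ^ n <= N / (N + n) = (k + 1) / (k + 2), so the event has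
   probability at least 1 / (k + 2) = Fbar x. *)

Lemma bernoulli_ineq {R : realDomainType} (n : nat) (t : R) :
  -1 <= t -> 1 + n%:R * t <= (1 + t) ^+ n.
Proof.
move=> t_ge; elim: n => [|n IHn]; first by rewrite mul0r addr0 expr0.
have n_ge0 : 0 <= n%:R :> R by [].
rewrite exprS -natr1; nra.
Qed.

Lemma expr_div_add1_le {R : realFieldType} (n : nat) (N : R) :
  0 < N -> (N / (N + 1)) ^+ n <= N / (N + n%:R).
Proof.
move=> N_gt0; have n_ge0 : 0 <= n%:R :> R by [].
have Ninv_gt0 : 0 < N^-1 by rewrite invr_gt0.
have bern : 1 + n%:R * N^-1 <= (1 + N^-1) ^+ n by apply: bernoulli_ineq; lra.
have -> : N / (N + 1) = (1 + N^-1)^-1 by field; lra.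
have -> : N / (N + n%:R) = (1 + n%:R * N^-1)^-1.
  by field; rewrite ?lt0r_neq0 //; lra.
rewrite exprVn lef_pV2 // posrE ?exprn_gt0 //; [lra | nra].
Qed.

Lemma sum_gt_of_lbound {R : numDomainType} {n : nat} (a : 'I_n -> R) (c y : R)
  (i : 'I_n) : (forall j, c <= a j) -> y < a i -> y + n.-1%:R * c < \sum_j a j.
Proof.
move=> c_le y_lt; rewrite (bigD1 i) //= ltr_leD //.
have <- : \sum_(j | j != i) c = n.-1%:R * c.
  by rewrite sumr_const cardC1 card_ord mulr_natl.
exact: ler_sum.
Qed.

Lemma Fbar_lt0 {R : realType} (x : R) : x < 0 -> Fbar x = 1.
Proof. by rewrite /Fbar => ->. Qed.

Lemma Fbar_ge0 {R : realType} (x : R) :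
  0 <= x -> Fbar x = ((Num.floor x)%:~R + 2)^-1.
Proof. by rewrite /Fbar ltNge => ->. Qed.

Lemma Fbar_thresholds {R : realType} (n : nat) (x : R) : (0 < n)%N ->
  exists c y : R, [/\ c <= y, n%:R * x < y + n.-1%:R * c
                    & Fbar x <= Fbar c ^+ n - (Fbar c - Fbar y) ^+ n].
Proof.
move=> n_gt0; have n_ge1 : 1 <= n%:R :> R by rewrite ler1n.
have n1E : n.-1%:R = n%:R - 1 :> R by rewrite -[in RHS](prednK n_gt0) -natr1 addrK.
have [x_lt0|x_ge0] := ltP x 0.
  have x2_lt0 : x / 2 < 0 by lra.
  exists x, (x / 2); rewrite !Fbar_lt0 // subrr expr0n eqn0Ngt n_gt0 expr1n subr0.
  by split; rewrite ?n1E //; nra.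
pose K : R := (Num.floor x)%:~R.
have K_ge0 : 0 <= K by rewrite ler0z floor_ge0.
have [Kx xK] : K <= x /\ x < K + 1.
  by split; [exact: floor_le | have := floorD1_gt x; rewrite intrD].
pose N := n%:R * (K + 1); pose del := (K + 1 - x) / 2.
exists (- del), (N - del).
have FN : Fbar (N - del) = (N + 1)^-1.
  rewrite Fbar_ge0; last by rewrite /N /del; nra.
  rewrite (@floor_def _ _ (n%:Z * (Num.floor x + 1) - 1)).
    by rewrite intrB intrM intrD /N; congr (_^-1); lra.
  rewrite intrD intrB intrM intrD -!pmulrn mulr1n -/K /N /del; apply/andP; split; lra.
have N_gt0 : 0 < N by rewrite /N; nra.
rewrite FN (Fbar_lt0 (- del)) /del; last lra.
split; first lra.
  by rewrite n1E /N; nra.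
rewrite expr1n Fbar_ge0 // -/K.
have -> : 1 - (N + 1)^-1 = N / (N + 1) by field; lra.
have := expr_div_add1_le n _ N_gt0.
have -> : N / (N + n%:R) = 1 - (K + 2)^-1.
  by rewrite /N; field; rewrite ?lt0r_neq0 //; nra.
lra.
Qed.

Lemma probabilityD_sub {R : realType} {d : measure_display} {T : measurableType d}
  (P : probability T R) (A B : set T) : measurable A -> measurable B ->
  B `<=` A -> P (A `\` B) = (P A - P B)%E.
Proof.
move=> mA mB BA; rewrite measureD ?setIidr //.
by rewrite (le_lt_trans (probability_le1 P mA)) ?ltry.
Qed.

Section iid_survival.
Context {R : realType} {d : measure_display} {T : measurableType d}.
Context {P : probability T R} {n : nat} {Xs : 'I_n -> {RV P >-> R}} {F : R -> R}.
Hypothesis survXs : forall i, has_survival P (Xs i) F.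
Hypothesis indepXs : mutually_independent P (fun i => Xs i : T -> R).

Let all_in (A : set R) : set T := \bigcap_(i in [set: 'I_n]) (Xs i @^-1` A).

Let measurable_all_in (A : set R) : measurable A -> measurable (all_in A).
Proof.
move=> mA; apply: fin_bigcap_measurable => [|i _]; first exact: finite_finset.
exact: measurable_funPTI.
Qed.

Lemma prob_all_in {A : set R} {p : R} : measurable A ->
  (forall i, P (Xs i @^-1` A) = p%:E) -> P (all_in A) = (p ^+ n)%:E.
Proof.
move=> mA PA; rewrite /all_in (indepXs (fun=> A)) //.
by under eq_bigr do rewrite PA; rewrite prodEFin prodr_const card_ord.
Qed.

Lemma prob_itv_gt (a : R) (i : 'I_n) : P (Xs i @^-1` `]a, +oo[) = (F a)%:E.
Proof.
rewrite -(survXs i a); congr (P _).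
by apply/funext => t; rewrite /preimage /= in_itv /= andbT.
Qed.

Lemma prob_itv_oc (a b : R) : a <= b -> forall i : 'I_n,
  P (Xs i @^-1` `]a, b]) = (F a - F b)%:E.
Proof.
move=> ab i.
have -> : Xs i @^-1` `]a, b] = Xs i @^-1` `]a, +oo[ `\` Xs i @^-1` `]b, +oo[.
  apply/seteqP; split => t /=; rewrite !in_itv /= !andbT.
    by case/andP => -> tb; split => //; apply/negP; rewrite -leNgt.
  by case=> -> /negP; rewrite -leNgt.
rewrite probabilityD_sub ?prob_itv_gt ?EFinB //; try exact: measurable_funPTI.
by move=> t /=; rewrite !in_itv /= !andbT; exact: le_lt_trans.
Qed.

Lemma prob_all_gt_not_all_le (a b : R) : a <= b ->
  P (all_in `]a, +oo[ `\` all_in `]a, b]) = (F a ^+ n - (F a - F b) ^+ n)%:E.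
Proof.
move=> ab; rewrite probabilityD_sub; try exact: measurable_all_in.
  by rewrite (prob_all_in _ (prob_itv_gt a)) // (prob_all_in _ (prob_itv_oc _ _ ab)).
move=> t alla i _; have := alla i I; rewrite /preimage /= !in_itv /= andbT.
by case/andP.
Qed.

Lemma all_gt_not_all_le_sum (a b : R) :
  all_in `]a, +oo[ `\` all_in `]a, b] `<=`
  [set t | b + n.-1%:R * a < \sum_i Xs i t].
Proof.
move=> t [alla not_alloc] /=; rewrite ltNge; apply/negP => sum_le.
have a_lt j : a < Xs j t by have := alla j I; rewrite /preimage /= in_itv /= andbT.
apply: not_alloc => i _; rewrite /preimage /= in_itv /= a_lt leNgt /=.
apply/negP => b_lt; have := sum_gt_of_lbound _ _ _ i (fun j => ltW (a_lt j)) b_lt.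
by rewrite ltNge sum_le.
Qed.

Lemma measurable_mean_gt (x : R) :
  measurable [set t | x < n%:R^-1 * \sum_i Xs i t].
Proof.
have mean_mfun : measurable_fun setT (fun t => n%:R^-1 * \sum_i Xs i t).
  apply: measurable_realfun.measurable_funM; first exact: measurable_cst.
  by apply: measurable_sum => i; exact: measurable_funPT.
rewrite -[X in measurable X]setTI.
have -> : [set t | x < n%:R^-1 * \sum_i Xs i t] =
          (fun t => n%:R^-1 * \sum_i Xs i t) @^-1` `]x, +oo[.
  by apply/funext => t; rewrite /preimage /= in_itv /= andbT.
exact: mean_mfun (measurable_itv _).
Qed.

Lemma prob_mean_gt_ge (x a b : R) : (0 < n)%N -> a <= b ->
  n%:R * x < b + n.-1%:R * a ->
  ((F a ^+ n - (F a - F b) ^+ n)%:E <= P [set t | (x < n%:R^-1 * \sum_i Xs i t)%R])%E.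
Proof.
move=> n_gt0 ab x_lt; rewrite -prob_all_gt_not_all_le //.
apply: le_measure; rewrite ?inE; last 1 first.
- move=> t /all_gt_not_all_le_sum /= sum_gt.
  by rewrite ltr_pdivlMl ?ltr0n //; exact: lt_trans sum_gt.
- by apply: measurableD; exact: measurable_all_in.
- exact: measurable_mean_gt.
Qed.

End iid_survival.

Theorem proposition2 (R : realType)
  (d0 : measure_display) (T0 : measurableType d0) (P0 : probability T0 R)
  (X : {RV P0 >-> R})
  (d : measure_display) (T : measurableType d) (P : probability T R)
  (n : nat) (Xs : 'I_n -> {RV P >-> R}) :
  (2 <= n)%N ->
  has_survival P0 X (@Fbar R) ->
  (forall i, has_survival P (Xs i) (@Fbar R)) ->
  mutually_independent P (fun i => Xs i : T -> R) ->
  st_le P0 X P (fun t => n%:R^-1 * \sum_(i < n) Xs i t).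
Proof.
move=> n_ge2 survX survXs indepXs x; rewrite survX.
have n_gt0 : (0 < n)%N by exact: leq_trans n_ge2.
have [a [b [ab x_lt Fx_le]]] := Fbar_thresholds n x n_gt0.
apply: le_trans (prob_mean_gt_ge survXs indepXs _ _ _ n_gt0 ab x_lt).
by rewrite lee_fin.
Qed.
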